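(* Let $n\ge3$, $U\ge3$, run the modified chain $(X_t)$ started at $X_1=a$, and consider its transitions at times $1,\dots,4n-1$. For a state $b$, let $T(a,b)$ be the event that $X_{4n}=b$ and no major self-loop is taken at any of the states $1,1',n,n'$ during these transitions. For a state $j$, let $T'(a,j)$ be the event that during these transitions no major self-loop is taken at $1,1',n,n'$ and exactly one switching link is taken, at state $j$. Let $L_k$ be the event that exactly $k$ major self-loops are taken during these transitions. If $0\le k\le 2n-2$ and $k\equiv p(b)-p(a)\pmod 2$, then there exists a state $j$ (depending on $a,b,k$) such that $$T'(a,j)\cap L_k\subseteq T(a,b)\cap L_k.$$
   Context: Let $n\ge3$, $U\ge3$ be integers. The ''modified chain'' is a Markov chain on the $2n$ states $\{1,\dots,n,1',\dots,n'\}$ whose transitions are labeled edges (a multigraph). Every state has exactly three outgoing edges: a ''major self-loop'' with probability $1/2$, a ''continuing link'' with probability $\frac12(1-\frac1U)$, and a ''switching link'' with probability $\frac1{2U}$. Continuing links: $i\to i+1$ for $1\le i\le n-1$, $n\to n'$, $i'\to(i-1)'$ for $2\le i\le n$, $1'\to1$. Switching links: $i\to(i+1)'$ for $1\le i\le n-1$, $n\to n$, $i'\to i-1$ for $2\le i\le n$, $1'\to1'$ (at $n$ and $1'$ the switching link is a self-loop distinct from the major self-loop). The circular position of a state is $p(i)=i$ and $p(i')=2n+1-i$ for $1\le i\le n$, considered modulo $2n$. *)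

From mathcomp Require Import all_boot.
Set Implicit Arguments. Unset Strict Implicit. Unset Printing Implicit Defensive.

(* A state of the modified chain: (false, i) is state i, (true, i) is state i',
   valid when 1 <= i <= n. *)
Definition state := (bool * nat)%type.

Definition valid (n : nat) (s : state) : bool := (1 <= s.2) && (s.2 <= n).

Inductive edge := Major | Cont | Switch.

Definition is_major (e : edge) : bool := if e is Major then true else false.
Definition is_switch (e : edge) : bool := if e is Switch then true else false.

Definition step (n : nat) (s : state) (e : edge) : state :=
  match e, s with
  | Major, _ => s
  | Cont, (false, i) => if i < n then (false, i.+1) else (true, n)
  | Cont, (true, i) => if 1 < i then (true, i.-1) else (false, 1)
  | Switch, (false, i) => if i < n then (true, i.+1) else (false, n)
  | Switch, (true, i) => if 1 < i then (false, i.-1) else (true, 1)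
  end.

Fixpoint run (n : nat) (a : state) (w : seq edge) : seq (state * edge) :=
  match w with
  | [::] => [::]
  | e :: w' => (a, e) :: run n (step n a e) w'
  end.

Definition final (n : nat) (a : state) (w : seq edge) : state := foldl (step n) a w.

Definition pos (n : nat) (s : state) : nat :=
  if s.1 then (2 * n).+1 - s.2 else s.2.

Definition special (n : nat) (s : state) : bool :=
  (s == (false, 1)) || (s == (true, 1)) || (s == (false, n)) || (s == (true, n)).

Definition no_major_special (n : nat) (a : state) (w : seq edge) : bool :=
  all (fun p => ~~ (is_major p.2 && special n p.1)) (run n a w).

(* Events on the sample path w (the edges taken at times 1..4n-1), X_1 = a. *)
Definition ev_T (n : nat) (a b : state) (w : seq edge) : Prop :=
  final n a w = b /\ no_major_special n a w.

Definition ev_T' (n : nat) (a j : state) (w : seq edge) : Prop :=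
  no_major_special n a w /\
  [seq p.1 | p <- run n a w & is_switch p.2] = [:: j].

Definition ev_L (k : nat) (w : seq edge) : Prop := count is_major w = k.

From mathcomp Require Import all_boot.
From mathcomp Require Import zify.

(* Modulo 2n a continuing link increases the circular position by
   one, a switching link reflects it (p' = -p) and a self-loop fixes it.  Along
   a path with exactly one switch, at j, and c continuing links the final
   position is therefore p(a) + c - 2 p(j).  A path of length 4n-1 with k
   self-loops and one switch has c = 4n-2-k, and the parity hypothesis makes
   p(a) + c - p(b) even, so it is 2 p(j) for some j among 1, ..., n. *)

Set Implicit Arguments. Unset Strict Implicit.

Definition is_cont (e : edge) : bool := if e is Cont then true else false.

Definition switch_states (n : nat) (a : state) (w : seq edge) : seq state :=
  [seq p.1 | p <- run n a w & is_switch p.2].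

Lemma size_switch_states n a w : size (switch_states n a w) = count is_switch w.
Proof. by elim: w a => [|[] w IH] a //=; rewrite IH. Qed.

Lemma size_count_edges w :
  size w = count is_major w + count is_cont w + count is_switch w.
Proof. elim: w => [|[] w IH] //=; rewrite IH; lia. Qed.

Lemma eq_mod_range m x y : 0 < x <= m -> 0 < y <= m -> x = y %[mod m] -> x = y.
Proof.
move=> /andP[x_gt0 x_le] /andP[y_gt0 y_le].
rewrite -(prednK x_gt0) -(prednK y_gt0) -(addn1 x.-1) -(addn1 y.-1) => /eqP.
by rewrite eqn_modDr !modn_small ?prednK // => /eqP; lia.
Qed.

Section Positions.

Variable n : nat.

Lemma valid_step s e : valid n s -> valid n (step n s e).
Proof.
case: s => [[] i]; rewrite /valid /= => /andP[? ?].
  by case: e => /=; [lia | case: (ltnP 1 i) => /= ?; lia ..].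
by case: e => /=; [lia | case: (ltnP i n) => /= ?; lia ..].
Qed.

Lemma valid_final a w : valid n a -> valid n (final n a w).
Proof. by elim: w a => [|e w IH] a ha //=; apply/IH/valid_step. Qed.

Lemma pos_range s : valid n s -> 0 < pos n s <= 2 * n.
Proof. by case: s => [[] i]; rewrite /valid /pos /= => /andP[? ?]; lia. Qed.

Lemma pos_inj s t : valid n s -> valid n t -> pos n s = pos n t -> s = t.
Proof.
case: s t => [[] i] [[] i']; rewrite /valid /pos /= => /andP[? ?] /andP[? ?] e.
- by congr (_, _); lia.
- exfalso; lia.
- exfalso; lia.
- by rewrite e.
Qed.

Lemma valid_eq_pos_mod s t :
  valid n s -> valid n t -> pos n s = pos n t %[mod 2 * n] -> s = t.
Proof.
move=> vs vt /(eq_mod_range (pos_range vs) (pos_range vt)); exact: pos_inj.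
Qed.

Lemma pos_step_cont s : valid n s -> pos n (step n s Cont) = (pos n s).+1 %[mod 2 * n].
Proof.
case: s => [[] i]; rewrite /valid /pos /= => /andP[? ?].
- case: ltnP => /= ?; first by apply: (congr1 (modn^~ _)); lia.
  have -> : (2 * n).+1 - i = 2 * n by lia.
  by rewrite -[(2 * n).+1]addn1 modnDl.
- by case: ltnP => /= ?; apply: (congr1 (modn^~ _)); lia.
Qed.

Lemma pos_step_switch s : valid n s -> pos n (step n s Switch) + pos n s = 0 %[mod 2 * n].
Proof.
case: s => [[] i]; rewrite /valid /pos /= => /andP[? ?].
- case: ltnP => /= ?.
  + by rewrite (_ : _ + _ = 2 * n) ?modnn ?mod0n //; lia.
  + by rewrite (_ : _ + _ = 2 * (2 * n)) ?modnMl ?mod0n //; lia.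
- by case: ltnP => /= ?; rewrite (_ : _ + _ = 2 * n) ?modnn ?mod0n //; lia.
Qed.

Lemma pos_final_no_switch a w : valid n a -> switch_states n a w = [::] ->
  pos n (final n a w) = pos n a + count is_cont w %[mod 2 * n].
Proof.
elim: w a => [|[] w IH] a ha; rewrite /switch_states /= => sw.
- by rewrite addn0.
- by rewrite add0n; apply: IH.
- rewrite (IH _ (valid_step Cont ha) sw) -modnDml pos_step_cont //.
  by rewrite modnDml addSnnS.
- by [].
Qed.

Lemma pos_final_one_switch a j w : valid n a -> switch_states n a w = [:: j] ->
  pos n (final n a w) + 2 * pos n j = pos n a + count is_cont w %[mod 2 * n].
Proof.
elim: w a => [|[] w IH] a ha; rewrite /switch_states /= => sw.
- by [].
- by rewrite add0n; apply: IH.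
- rewrite (IH _ (valid_step Cont ha) sw) -modnDml pos_step_cont //.
  by rewrite modnDml addSnnS.
- case: sw => <- /(pos_final_no_switch (valid_step Switch ha)) e.
  rewrite add0n -modnDml e modnDml.
  have -> : pos n (step n a Switch) + count is_cont w + 2 * pos n a
            = pos n (step n a Switch) + pos n a + (pos n a + count is_cont w) by lia.
  by rewrite -modnDml pos_step_switch // mod0n.
Qed.

End Positions.

Lemma even_eq_double_mod n D : 0 < n -> ~~ odd D ->
  exists2 q, 0 < q <= n & 2 * q = D %[mod 2 * n].
Proof.
move=> n_gt0 D_even; have e2 : D = 2 * D./2.
  by rewrite -[LHS]odd_double_half (negbTE D_even) mul2n.
have [q0|q_gt0] := posnP (D./2 %% n).
- exists n; first lia.
  by rewrite [in RHS]e2 -[in RHS]muln_modr q0 muln0 modnn.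
- exists (D./2 %% n); first by rewrite q_gt0 ltnW // ltn_pmod.
  by rewrite muln_modr modn_mod -e2.
Qed.

Theorem lemma10 (n U : nat) (hn : 3 <= n) (hU : 3 <= U) (a b : state)
  (ha : valid n a) (hb : valid n b) (k : nat) (hk : k <= 2 * n - 2)
  (hpar : k + pos n a = pos n b %[mod 2]) :
  exists j : state, valid n j /\
    forall w : seq edge, size w = (4 * n).-1 ->
      (ev_T' n a j w /\ ev_L k w) -> (ev_T n a b w /\ ev_L k w).
Proof.
have n_gt0 : 0 < n by lia.
have /andP[_ pb_le] := pos_range hb.
pose c := 4 * n - 2 - k.
pose D := pos n a + c + (2 * n - pos n b).
have D_even : ~~ odd D.
  have : D %% 2 = 0 by move: hpar; rewrite /D /c; lia.
  by rewrite modn2; case: odd.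
have [q /andP[q_gt0 q_le] e2q] := even_eq_double_mod n_gt0 D_even.
exists (false, q); split; first by apply/andP.
move=> w size_w [[no_major one_switch] k_major]; do !split => //.
rewrite -/(switch_states n a w) in one_switch.
have c_cont : count is_cont w = c.
  move: (size_count_edges w) (size_switch_states n a w).
  rewrite one_switch size_w k_major /=; lia.
apply: valid_eq_pos_mod (valid_final w ha) hb _.
apply/eqP; rewrite -(eqn_modDr (2 * q)); apply/eqP.
rewrite [in LHS](pos_final_one_switch ha one_switch) c_cont.
rewrite -[in RHS]modnDmr e2q modnDmr.
have -> : pos n b + D = pos n a + c + 2 * n by rewrite /D; lia.
by rewrite modnDr.
Qed.
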